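(* Let $A$ be an $n\times n$ $(0,1)$-matrix, and let $\Phi$ be a depth-$2$ circuit with $L$ wires computing the linear operator $f_A(\vec x)=A\vec x$ over $GF(2)$. Suppose every output node of $\Phi$ computes a linear boolean function. Then there is a depth-$2$ circuit $\Phi'$ that computes $f_A$, has at most $L+2n$ wires, and in which every non-input node computes a linear boolean function.
   Context: A depth-$2$ circuit has $n$ input nodes $x_1,\dots,x_n$, a set of middle nodes, and $n$ output nodes $y_1,\dots,y_n$. Wires go only from inputs to middle nodes, from middle nodes to outputs, or from inputs directly to outputs. Each non-input node may compute an arbitrary boolean function of the values at its in-neighbours, with no restriction on fanin or fanout. The circuit computes $f=(f_1,\dots,f_n)$ if the function at $y_i$ equals $f_i$ for all $i$. A boolean function is linear if it is the sum modulo $2$ of some subset of its arguments (the empty sum is allowed) or the negation of such a sum. The number of wires is the number of edges of the circuit. *)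

From mathcomp Require Import all_boot all_order all_algebra.
Unset Strict Implicit. Unset Printing Implicit Defensive.

(* Wires: input->middle (wIM), middle->output (wMO), input->output (wIO).
   gmid j : the boolean function at middle node j, given the input values.
   gout k : the boolean function at output k, given the values of all
            potential in-neighbours (inputs inl i, middle nodes inr j). *)
Record circuit (n : nat) := Circuit {
  nmid : nat;
  wIM : 'I_n -> 'I_nmid -> bool;
  wMO : 'I_nmid -> 'I_n -> bool;
  wIO : 'I_n -> 'I_n -> bool;
  gmid : 'I_nmid -> ('I_n -> bool) -> bool;
  gout : 'I_n -> ('I_n + 'I_nmid -> bool) -> bool }.
Arguments nmid {n}. Arguments wIM {n}. Arguments wMO {n}. Arguments wIO {n}.
Arguments gmid {n}. Arguments gout {n}.

Definition depends_only {T : Type} (D : pred T) (f : (T -> bool) -> bool) :=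
  forall v v' : T -> bool, (forall t, D t -> v t = v' t) -> f v = f v'.

(* f is a linear boolean function of its arguments D: the mod-2 sum of
   some subset S of D, or the negation of such a sum. *)
Definition linear_on {T : finType} (D : pred T) (f : (T -> bool) -> bool) :=
  exists (S : {set T}) (c : bool),
    {subset S <= D} /\ forall v, f v = c (+) \big[addb/false]_(t in S) v t.

Definition mid_in {n} (C : circuit n) (j : 'I_(nmid C)) : pred 'I_n :=
  fun i => wIM C i j.
Definition out_in {n} (C : circuit n) (k : 'I_n) : pred ('I_n + 'I_(nmid C)) :=
  fun u => match u with inl i => wIO C i k | inr j => wMO C j k end.

Definition wf_circuit {n} (C : circuit n) :=
  (forall j, depends_only (mid_in C j) (gmid C j)) /\
  (forall k, depends_only (out_in C k) (gout C k)).

Definition mid_linear {n} (C : circuit n) (j : 'I_(nmid C)) :=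
  linear_on (mid_in C j) (gmid C j).
Definition out_linear {n} (C : circuit n) (k : 'I_n) :=
  linear_on (out_in C k) (gout C k).

Definition eval_out {n} (C : circuit n) (x : 'I_n -> bool) (k : 'I_n) : bool :=
  gout C k (fun u => match u with inl i => x i | inr j => gmid C j x end).

Definition computes {n} (C : circuit n) (A : 'M[bool]_n) :=
  forall (x : 'I_n -> bool) (k : 'I_n),
    eval_out C x k = \big[addb/false]_(i < n) (A k i && x i).

Definition wires {n} (C : circuit n) : nat :=
  #|[set p : 'I_n * 'I_(nmid C) | wIM C p.1 p.2]|
  + #|[set p : 'I_(nmid C) * 'I_n | wMO C p.1 p.2]|
  + #|[set p : 'I_n * 'I_n | wIO C p.1 p.2]|.

(* Replace every gate g by its linear part x |-> sum_t x_t (g(e_t) + g(0)),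
   keeping all wires.  A gate
   depending only on D has zero coefficients outside D, so the new circuit is
   well formed and linear.  Taking linear parts commutes with mod-2 sums and
   sends an affine function c + sum_(t in S) v_t to sum_(t in S) v_t.  Each
   old output is affine in its in-neighbours, and the sum of those
   in-neighbours is c + (A x)_k as a function of x; hence the new k-th output
   is the linear part of c + (A x)_k, namely (A x)_k. *)

From mathcomp Require Import all_boot all_order all_algebra.

Section Linearize.

Context {T : finType}.
Implicit Types (f : (T -> bool) -> bool) (x : T -> bool) (D : pred T).

Definition linearize f x : bool :=
  \big[addb/false]_(t : T) (x t && (f (fun s => s == t) (+) f (fun _ => false))).

Lemma linearize_sum (I : Type) (r : seq I) (P : pred I)
    (F : I -> (T -> bool) -> bool) x :
  linearize (fun y => \big[addb/false]_(i <- r | P i) F i y) x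
  = \big[addb/false]_(i <- r | P i) linearize (F i) x.
Proof.
rewrite /linearize exchange_big /=; apply: eq_bigr => t _.
by rewrite -big_split /= big_distrr.
Qed.

Lemma linearize_affine {f} {S : {set T}} {c : bool} :
  (forall v, f v = c (+) \big[addb/false]_(t in S) v t) ->
  forall x, linearize f x = \big[addb/false]_(t in S) x t.
Proof.
move=> Hf x; rewrite /linearize [RHS]big_mkcond; apply: eq_bigr => t _.
have -> : f (fun s => s == t) (+) f (fun _ => false) = (t \in S).
  rewrite !Hf [\big[addb/false]_(s in S) false]big1 // addbF addbAC addbb /=.
  have [tS | tNS] := boolP (t \in S); last first.
    by apply: big1 => s sS; apply/negbTE; apply: contraNneq tNS => <-.
  by rewrite (bigD1 t) //= eqxx big1 // => s /andP [_ /negbTE].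
by case: (t \in S); rewrite ?andbT ?andbF.
Qed.

Lemma linearize_coord (s : T) x : linearize (fun y => y s) x = x s.
Proof.
by rewrite (@linearize_affine _ [set s] false) ?big_set1 // => v; rewrite big_set1.
Qed.

Lemma linear_on_linearize D f : depends_only D f -> linear_on D (linearize f).
Proof.
move=> Hf; exists [set t | f (fun s => s == t) (+) f (fun _ => false)], false.
split=> [t|v]; last first.
  rewrite /linearize /= [RHS]big_mkcond; apply: eq_bigr => t _.
  by rewrite inE; case: (_ (+) _); rewrite ?andbT ?andbF.
rewrite inE; apply: contraTT => tND.
rewrite (Hf _ (fun _ => false)) ?addbb // => s Ds.
by apply/negbTE; apply: contraNneq tND => <-.
Qed.

Lemma linear_on_depends_only D f : linear_on D f -> depends_only D f.
Proof.
move=> [S [c [SD Hf]]] v v' E; rewrite !Hf; congr addb.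
by apply: eq_bigr => t /SD /E.
Qed.

End Linearize.

Definition linearize_circuit {n} (C : circuit n) : circuit n :=
  @Circuit n (nmid C) (wIM C) (wMO C) (wIO C)
    (fun j => linearize (gmid C j)) (fun k => linearize (gout C k)).

Section LinearizeCircuit.

Variables (n : nat) (C : circuit n).
Hypothesis wfC : wf_circuit C.

Lemma linearize_circuit_mid_linear j : mid_linear (linearize_circuit C) j.
Proof. exact: linear_on_linearize (wfC.1 j). Qed.

Lemma linearize_circuit_out_linear k : out_linear (linearize_circuit C) k.
Proof. exact: linear_on_linearize (wfC.2 k). Qed.

Lemma linearize_circuit_wf : wf_circuit (linearize_circuit C).
Proof.
split=> [j|k]; apply: linear_on_depends_only.
  exact: linearize_circuit_mid_linear.
exact: linearize_circuit_out_linear.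
Qed.

Lemma wires_linearize_circuit : wires (linearize_circuit C) = wires C.
Proof. by []. Qed.

Lemma linearize_circuit_computes (A : 'M[bool]_n) :
  (forall k, out_linear C k) -> computes C A -> computes (linearize_circuit C) A.
Proof.
move=> outC CA x k; have [S [c [_ goutE]]] := outC k.
pose val y t := match t with inl i => y i | inr j => gmid C j y end.
have rowE y : \big[addb/false]_(i in [set i | A k i]) y i
              = \big[addb/false]_(i < n) (A k i && y i).
  by rewrite big_mkcond; apply: eq_bigr => i _; rewrite inE; case: (A k i).
have sumE y : \big[addb/false]_(t in S) val y t
              = c (+) \big[addb/false]_(i in [set i | A k i]) y i.
  by rewrite rowE; have := CA y k; rewrite /eval_out goutE => <-; rewrite addKb.
rewrite /eval_out /= (linearize_affine goutE) -rowE -(linearize_affine sumE).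
by rewrite linearize_sum; apply: eq_bigr => -[i|j] _ //=; rewrite linearize_coord.
Qed.

End LinearizeCircuit.

Theorem theorem2 (n : nat) (A : 'M[bool]_n) (Phi : circuit n) (L : nat) :
  wf_circuit Phi -> computes Phi A -> wires Phi = L ->
  (forall k, out_linear Phi k) ->
  exists Phi' : circuit n,
    [/\ wf_circuit Phi', computes Phi' A, wires Phi' <= L + 2 * n,
        (forall j, mid_linear Phi' j) & (forall k, out_linear Phi' k)].
Proof.
move=> wfPhi PhiA wiresPhi outPhi; exists (linearize_circuit Phi); split.
- exact: linearize_circuit_wf.
- exact: linearize_circuit_computes.
- by rewrite wires_linearize_circuit wiresPhi leq_addr.
- exact: linearize_circuit_mid_linear.
- exact: linearize_circuit_out_linear.
Qed.
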